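(* Let $(\mathfrak{g},[\cdot,\cdot]_{\mathfrak{g}})$ be a Leibniz algebra over a field $\mathbf{K}$, $(V;\rho^L,\rho^R)$ a representation, and $T:V\to\mathfrak{g}$ a relative Rota-Baxter operator. Then for every Nijenhuis element $x\in\mathrm{Nij}(T)$, with $\mathfrak{T}=\partial_Tx$, i.e. $\mathfrak{T}(u)=T\rho^L(x)u-[x,Tu]_{\mathfrak{g}}$, the family $T_t=T+t\mathfrak{T}$ is a trivial linear deformation of $T$.
   Context: A Leibniz algebra is a vector space $\mathfrak{g}$ with a bilinear map $[\cdot,\cdot]_{\mathfrak{g}}$ such that $[x,[y,z]_{\mathfrak{g}}]_{\mathfrak{g}}=[[x,y]_{\mathfrak{g}},z]_{\mathfrak{g}}+[y,[x,z]_{\mathfrak{g}}]_{\mathfrak{g}}$. A representation $(V;\rho^L,\rho^R)$ is a vector space $V$ with linear maps $\rho^L,\rho^R:\mathfrak{g}\to\mathfrak{gl}(V)$ with $\rho^L([x,y]_{\mathfrak{g}})=[\rho^L(x),\rho^L(y)]$, $\rho^R([x,y]_{\mathfrak{g}})=[\rho^L(x),\rho^R(y)]$, $\rho^R(y)\rho^L(x)=-\rho^R(y)\rho^R(x)$ (commutators in $\mathfrak{gl}(V)$). $L_xy=[x,y]_{\mathfrak{g}}$. A relative Rota-Baxter operator is a linear $T:V\to\mathfrak{g}$ with $[Tv_1,Tv_2]_{\mathfrak{g}}=T(\rho^L(Tv_1)v_2+\rho^R(Tv_2)v_1)$ for all $v_1,v_2\in V$. A homomorphism from a relative Rota-Baxter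 operator $T'$ to $T$ is a pair of a Leibniz algebra homomorphism $\phi_{\mathfrak{g}}:\mathfrak{g}\to\mathfrak{g}$ and a linear map $\phi_V:V\to V$ with $T\circ\phi_V=\phi_{\mathfrak{g}}\circ T'$, $\phi_V\rho^L(y)u=\rho^L(\phi_{\mathfrak{g}}(y))\phi_V(u)$, $\phi_V\rho^R(y)u=\rho^R(\phi_{\mathfrak{g}}(y))\phi_V(u)$ for all $y\in\mathfrak{g},u\in V$. A linear map $\mathfrak{T}:V\to\mathfrak{g}$ generates a linear deformation $T_t=T+t\mathfrak{T}$ if $T+t\mathfrak{T}$ is a relative Rota-Baxter operator for every $t\in\mathbf{K}$; it is trivial if there is $y\in\mathfrak{g}$ such that for all $t$, $(\mathrm{Id}_{\mathfrak{g}}+tL_y,\mathrm{Id}_V+t\rho^L(y))$ is a homomorphism from $T_t$ to $T$. An element $x\in\mathfrak{g}$ is a Nijenhuis element associated to $T$ if for all $y,z\in\mathfrak{g}$, $u\in V$: $[[x,y]_{\mathfrak{g}},[x,z]_{\mathfrak{g}}]_{\mathfrak{g}}=0$, $\rho^L([x,y]_{\mathfrak{g}})\rho^L(x)=0$, $\rho^R([x,y]_{\mathfrak{g}})\rho^L(x)=0$, and $[x,T\rho^L(x)u-[x,Tu]_{\mathfrak{g}}]_{\mathfrak{g}}=0$. $\mathrm{Nij}(T)$ denotes the set of these. *)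

From HB Require Import structures.
From mathcomp Require Import all_boot all_algebra.
Set Implicit Arguments. Unset Strict Implicit. Unset Printing Implicit Defensive.
Import GRing.Theory.
Local Open Scope ring_scope.

Section Leibniz.
Variables (K : fieldType) (g V : lmodType K).

Definition is_linear (U W : lmodType K) (f : U -> W) : Prop :=
  forall (a : K) (u v : U), f (a *: u + v) = a *: f u + f v.

Definition is_bilinear (U W X : lmodType K) (f : U -> W -> X) : Prop :=
  (forall w : W, is_linear (fun u => f u w)) /\ (forall u : U, is_linear (f u)).

Definition leibniz_algebra (br : g -> g -> g) : Prop :=
  is_bilinear br /\
  forall x y z, br x (br y z) = br (br x y) z + br y (br x z).

Definition leibniz_rep (br : g -> g -> g) (rhoL rhoR : g -> V -> V) : Prop :=
  [/\ is_bilinear rhoL, is_bilinear rhoR,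
   (forall x y u, rhoL (br x y) u = rhoL x (rhoL y u) - rhoL y (rhoL x u)),
   (forall x y u, rhoR (br x y) u = rhoL x (rhoR y u) - rhoR y (rhoL x u)) &
   (forall x y u, rhoR y (rhoL x u) = - rhoR y (rhoR x u))].

Definition relative_RB (br : g -> g -> g) (rhoL rhoR : g -> V -> V)
  (T : V -> g) : Prop :=
  is_linear T /\
  forall v1 v2, br (T v1) (T v2) = T (rhoL (T v1) v2 + rhoR (T v2) v1).

Definition leibniz_hom (br : g -> g -> g) (phi : g -> g) : Prop :=
  is_linear phi /\ forall x y, phi (br x y) = br (phi x) (phi y).

Definition relative_RB_hom (br : g -> g -> g) (rhoL rhoR : g -> V -> V)
  (T' T : V -> g) (phig : g -> g) (phiV : V -> V) : Prop :=
  [/\ leibniz_hom br phig, is_linear phiV,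
   (forall u, T (phiV u) = phig (T' u)),
   (forall y u, phiV (rhoL y u) = rhoL (phig y) (phiV u)) &
   (forall y u, phiV (rhoR y u) = rhoR (phig y) (phiV u))].

Definition linear_deformation (br : g -> g -> g) (rhoL rhoR : g -> V -> V)
  (T frakT : V -> g) : Prop :=
  is_linear frakT /\
  forall t : K, relative_RB br rhoL rhoR (fun u => T u + t *: frakT u).

Definition trivial_linear_deformation (br : g -> g -> g) (rhoL rhoR : g -> V -> V)
  (T frakT : V -> g) : Prop :=
  linear_deformation br rhoL rhoR T frakT /\
  exists y : g, forall t : K,
    relative_RB_hom br rhoL rhoR (fun u => T u + t *: frakT u) T
      (fun z => z + t *: br y z) (fun u => u + t *: rhoL y u).

Definition nijenhuis_elt (br : g -> g -> g) (rhoL rhoR : g -> V -> V)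
  (T : V -> g) (x : g) : Prop :=
  [/\ (forall y z, br (br x y) (br x z) = 0),
   (forall y u, rhoL (br x y) (rhoL x u) = 0),
   (forall y u, rhoR (br x y) (rhoL x u) = 0) &
   (forall u, br x (T (rhoL x u) - br x (T u)) = 0)].

Definition dT (br : g -> g -> g) (rhoL : g -> V -> V) (T : V -> g) (x : g) : V -> g :=
  fun u => T (rhoL x u) - br x (T u).

End Leibniz.

From HB Require Import structures.
From mathcomp Require Import all_boot all_algebra.
From mathcomp Require Import ring.
Set Implicit Arguments. Unset Strict Implicit. Unset Printing Implicit Defensive.
Import GRing.Theory.
Local Open Scope ring_scope.

(* Put phi_t = Id + t L_x and psi_t = Id + t rho^L(x).  Expanding the
   compatibility conditions of a homomorphism from T_t to T, the terms of order
   t^2 are exactly the Nijenhuis conditions, so (phi_t, psi_t) is such a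
   homomorphism for every t.  A homomorphism into a relative Rota-Baxter
   operator maps the Rota-Baxter defect of its source to 0.  Since dT x is a
   1-cocycle, the defect of T_t is t^2 times the defect of dT x; and
   phi_1 = Id + L_x fixes the latter because [x, dT x u] = 0.  Hence dT x, and
   therefore every T_t, has zero defect. *)

(* Abelian group identities are decided by [ring] after embedding [M] into the
   commutative ring [int * M] with product (a, m) (b, n) = (a b, n *~ a + m *~ b). *)
Definition trivial_ext (M : zmodType) := (int * M)%type.
HB.instance Definition _ (M : zmodType) := GRing.Zmodule.on (trivial_ext M).

Section TrivialExtension.
Variable M : zmodType.

Definition trivial_ext_mul (p q : trivial_ext M) : trivial_ext M :=
  (p.1 * q.1, p.2 *~ q.1 + q.2 *~ p.1).

Lemma trivial_ext_mulA : associative trivial_ext_mul.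
Proof.
move=> [a m] [b n] [c k]; rewrite /trivial_ext_mul /=; congr (_, _).
  by rewrite mulrA.
by rewrite !mulrzDl !mulrzA -!addrA [n *~ c *~ a]mulrzAC [k *~ b *~ a]mulrzAC.
Qed.

Lemma trivial_ext_mulC : commutative trivial_ext_mul.
Proof. by move=> [a m] [b n]; rewrite /trivial_ext_mul /= mulrC addrC. Qed.

Lemma trivial_ext_mul1 : left_id ((1, 0) : trivial_ext M) trivial_ext_mul.
Proof. by move=> [a m]; rewrite /trivial_ext_mul /= mul1r mul0rz add0r. Qed.

Lemma trivial_ext_mulDl : left_distributive trivial_ext_mul +%R.
Proof.
move=> [a m] [b n] [c k]; rewrite /trivial_ext_mul /=; congr (_, _).
  by rewrite mulrDl.
by rewrite mulrzDl mulrzDr !addrA; congr (_ + _); rewrite addrAC.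
Qed.

Lemma trivial_ext_oner_neq0 : ((1, 0) : trivial_ext M) != 0.
Proof. by []. Qed.

HB.instance Definition _ :=
  GRing.Zmodule_isComNzRing.Build (trivial_ext M) trivial_ext_mulA
    trivial_ext_mulC trivial_ext_mul1 trivial_ext_mulDl trivial_ext_oner_neq0.

Definition trivial_ext_in (m : M) : trivial_ext M := (0, m).

Lemma trivial_ext_in_additive : zmod_morphism trivial_ext_in.
Proof. by []. Qed.

HB.instance Definition _ :=
  GRing.isZmodMorphism.Build M (trivial_ext M) trivial_ext_in
    trivial_ext_in_additive.

Lemma trivial_ext_in_inj : injective trivial_ext_in.
Proof. by move=> m n [->]. Qed.

End TrivialExtension.

Ltac zmod_ring := apply: trivial_ext_in_inj; ring.

Lemma scalerAC (K : fieldType) (V : lmodType K) (a b : K) (v : V) :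
  a *: (b *: v) = b *: (a *: v).
Proof. by rewrite !scalerA mulrC. Qed.

Section LinearMaps.
Variables (K : fieldType) (U W : lmodType K).

Section OneMap.
Variables (f : U -> W) (f_lin : is_linear f).

Lemma is_linearD u v : f (u + v) = f u + f v.
Proof. by rewrite -[u in LHS]scale1r f_lin scale1r. Qed.

Lemma is_linear0 : f 0 = 0.
Proof. by apply: (addrI (f 0)); rewrite -is_linearD !addr0. Qed.

Lemma is_linearZ a u : f (a *: u) = a *: f u.
Proof. by rewrite -[a *: u]addr0 f_lin is_linear0 addr0. Qed.

Lemma is_linearN u : f (- u) = - f u.
Proof. by rewrite -scaleN1r is_linearZ scaleN1r. Qed.

Lemma is_linearB u v : f (u - v) = f u - f v.
Proof. by rewrite is_linearD is_linearN. Qed.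

End OneMap.

Lemma is_linear_of (f : U -> W) :
  (forall u v, f (u + v) = f u + f v) -> (forall a u, f (a *: u) = a *: f u) ->
  is_linear f.
Proof. by move=> fD fZ a u v; rewrite fD fZ. Qed.

Lemma is_linear_addZ (f h : U -> W) (t : K) :
  is_linear f -> is_linear h -> is_linear (fun u => f u + t *: h u).
Proof.
move=> f_lin h_lin; apply: is_linear_of => [u v|a u].
  by rewrite (is_linearD f_lin) (is_linearD h_lin) scalerDr; zmod_ring.
by rewrite (is_linearZ f_lin) (is_linearZ h_lin) scalerDr scalerAC.
Qed.

End LinearMaps.

Section BilinearMaps.
Variables (K : fieldType) (U W X : lmodType K) (f : U -> W -> X).
Hypothesis f_bilin : is_bilinear f.

Lemma is_bilinearDl p q r : f (p + q) r = f p r + f q r.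
Proof. exact: (is_linearD (f_bilin.1 r)). Qed.

Lemma is_bilinearBl p q r : f (p - q) r = f p r - f q r.
Proof. exact: (is_linearB (f_bilin.1 r)). Qed.

Lemma is_bilinear0l r : f 0 r = 0.
Proof. exact: (is_linear0 (f_bilin.1 r)). Qed.

Lemma is_bilinearDr p q r : f r (p + q) = f r p + f r q.
Proof. exact: (is_linearD (f_bilin.2 r)). Qed.

Lemma is_bilinearBr p q r : f r (p - q) = f r p - f r q.
Proof. exact: (is_linearB (f_bilin.2 r)). Qed.

Lemma is_bilinear0r r : f r 0 = 0.
Proof. exact: (is_linear0 (f_bilin.2 r)). Qed.

Lemma is_bilinear_addZl t p P q : f (p + t *: P) q = f p q + t *: f P q.
Proof. by rewrite is_bilinearDl (is_linearZ (f_bilin.1 q)). Qed.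

Lemma is_bilinear_addZr t p q Q : f p (q + t *: Q) = f p q + t *: f p Q.
Proof. by rewrite is_bilinearDr (is_linearZ (f_bilin.2 p)). Qed.

Lemma is_bilinear_addZ t p P q Q :
  f (p + t *: P) (q + t *: Q) =
  f p q + t *: (f p Q + f P q) + t *: (t *: f P Q).
Proof. by rewrite is_bilinear_addZl !is_bilinear_addZr !scalerDr; zmod_ring. Qed.

End BilinearMaps.

Section RotaBaxterDefect.
Variables (K : fieldType) (g V : lmodType K).
Variables (br : g -> g -> g) (rhoL rhoR : g -> V -> V).

Definition rb_defect (T : V -> g) (v1 v2 : V) : g :=
  br (T v1) (T v2) - T (rhoL (T v1) v2 + rhoR (T v2) v1).

Lemma relative_RBP (T : V -> g) :
  is_linear T -> (forall v1 v2, rb_defect T v1 v2 = 0) ->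
  relative_RB br rhoL rhoR T.
Proof.
by move=> T_lin T0; split=> // v1 v2; apply/eqP; rewrite -subr_eq0; apply/eqP/T0.
Qed.

Lemma relative_RB_hom_defect (T' T : V -> g) phig phiV v1 v2 :
  relative_RB br rhoL rhoR T -> relative_RB_hom br rhoL rhoR T' T phig phiV ->
  phig (rb_defect T' v1 v2) = 0.
Proof.
move=> [_ T_RB] [[phig_lin phig_br] phiV_lin T_phiV phiV_rhoL phiV_rhoR].
rewrite /rb_defect (is_linearB phig_lin) phig_br -!T_phiV.
by rewrite (is_linearD phiV_lin) phiV_rhoL phiV_rhoR -!T_phiV -T_RB subrr.
Qed.

End RotaBaxterDefect.

Section NijenhuisDeformation.
Variables (K : fieldType) (g V : lmodType K).
Variables (br : g -> g -> g) (rhoL rhoR : g -> V -> V) (T : V -> g) (x : g).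

Hypothesis br_bilin : is_bilinear br.
Hypothesis br_leibniz : forall p q r, br p (br q r) = br (br p q) r + br q (br p r).
Hypothesis rhoL_bilin : is_bilinear rhoL.
Hypothesis rhoR_bilin : is_bilinear rhoR.
Hypothesis rhoL_br :
  forall p q u, rhoL (br p q) u = rhoL p (rhoL q u) - rhoL q (rhoL p u).
Hypothesis rhoR_br :
  forall p q u, rhoR (br p q) u = rhoL p (rhoR q u) - rhoR q (rhoL p u).
Hypothesis T_lin : is_linear T.
Hypothesis T_RB : forall v1 v2, br (T v1) (T v2) = T (rhoL (T v1) v2 + rhoR (T v2) v1).

Local Notation F := (dT br rhoL T x).
Local Notation phig t := (fun z => z + t *: br x z).
Local Notation phiV t := (fun u => u + t *: rhoL x u).
Local Notation Tt t := (fun u => T u + t *: F u).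

Lemma dT_linear : is_linear F.
Proof.
apply: is_linear_of => [u v|a u]; rewrite /dT.
  rewrite (is_linearD (rhoL_bilin.2 x)) !(is_linearD T_lin).
  by rewrite (is_bilinearDr br_bilin); zmod_ring.
rewrite (is_linearZ (rhoL_bilin.2 x)) !(is_linearZ T_lin).
by rewrite (is_linearZ (br_bilin.2 x)) scalerBr.
Qed.

Lemma dT_cocycle v1 v2 :
  br (T v1) (F v2) + br (F v1) (T v2) =
  T (rhoL (F v1) v2) + T (rhoR (F v2) v1) + F (rhoL (T v1) v2) + F (rhoR (T v2) v1).
Proof.
have br_xl p q : br (br x p) q = br x (br p q) - br p (br x q).
  by rewrite br_leibniz addrK.
rewrite /dT !(is_bilinearBr br_bilin) !(is_bilinearBl br_bilin).
rewrite (is_bilinearBl rhoL_bilin) (is_bilinearBl rhoR_bilin).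
rewrite br_xl !T_RB rhoL_br rhoR_br.
do 3 rewrite ?(is_linearD T_lin) ?(is_linearB T_lin) ?(is_linearN T_lin)
  ?(is_linearD (rhoL_bilin.2 x)) ?(is_linearB (rhoL_bilin.2 x))
  ?(is_bilinearDr br_bilin) ?(is_bilinearBr br_bilin).
zmod_ring.
Qed.

Lemma dT_deformation_defect t v1 v2 :
  rb_defect br rhoL rhoR (Tt t) v1 v2 =
  t *: (t *: rb_defect br rhoL rhoR F v1 v2).
Proof.
rewrite /rb_defect (is_bilinear_addZ br_bilin).
rewrite (is_bilinear_addZl rhoL_bilin) (is_bilinear_addZl rhoR_bilin) dT_cocycle T_RB.
do 2 rewrite ?(is_linearD T_lin) ?(is_linearZ T_lin) ?(is_linearD dT_linear)
  ?(is_linearZ dT_linear).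
do 3 rewrite ?scalerDr ?scalerN ?scalerBr.
zmod_ring.
Qed.

Section NijenhuisElement.
Hypothesis x_br : forall p q, br (br x p) (br x q) = 0.
Hypothesis x_rhoL : forall p u, rhoL (br x p) (rhoL x u) = 0.
Hypothesis x_rhoR : forall p u, rhoR (br x p) (rhoL x u) = 0.
Hypothesis x_dT : forall u, br x (F u) = 0.

Lemma nijenhuis_hom t : relative_RB_hom br rhoL rhoR (Tt t) T (phig t) (phiV t).
Proof.
split.
- split=> [|p q]; first exact: is_linear_addZ (br_bilin.2 x).
  by rewrite (is_bilinear_addZ br_bilin) x_br !scaler0 addr0 br_leibniz; zmod_ring.
- exact: is_linear_addZ (rhoL_bilin.2 x).
- move=> u; rewrite (is_linearD T_lin) (is_linearZ T_lin) (is_bilinear_addZr br_bilin).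
  by rewrite x_dT !scaler0 addr0 /dT scalerBr; zmod_ring.
- move=> p u; rewrite (is_bilinear_addZ rhoL_bilin) x_rhoL !scaler0 addr0 rhoL_br.
  by rewrite scalerDr scalerBr; zmod_ring.
- move=> p u; rewrite (is_bilinear_addZ rhoR_bilin) x_rhoR !scaler0 addr0 rhoR_br.
  by rewrite scalerDr scalerBr; zmod_ring.
Qed.

Lemma dT_defect0 v1 v2 : rb_defect br rhoL rhoR F v1 v2 = 0.
Proof.
have x_defect : br x (rb_defect br rhoL rhoR F v1 v2) = 0.
  rewrite /rb_defect (is_bilinearBr br_bilin) br_leibniz !x_dT.
  by rewrite (is_bilinear0l br_bilin) (is_bilinear0r br_bilin) subr0 addr0.
have := relative_RB_hom_defect v1 v2 (conj T_lin T_RB) (nijenhuis_hom 1).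
by rewrite dT_deformation_defect !scale1r x_defect addr0.
Qed.

End NijenhuisElement.

End NijenhuisDeformation.

Theorem theorem3p8 (K : fieldType) (g V : lmodType K)
  (br : g -> g -> g) (rhoL rhoR : g -> V -> V) (T : V -> g) :
  leibniz_algebra br ->
  leibniz_rep br rhoL rhoR ->
  relative_RB br rhoL rhoR T ->
  forall x : g, nijenhuis_elt br rhoL rhoR T x ->
  trivial_linear_deformation br rhoL rhoR T (dT br rhoL T x).
Proof.
move=> [br_bilin br_leibniz] [rhoL_bilin rhoR_bilin rhoL_br rhoR_br _] [T_lin T_RB].
move=> x [x_br x_rhoL x_rhoR x_dT].
have F_lin := dT_linear x br_bilin rhoL_bilin T_lin.
split; first split=> // t.
  apply: relative_RBP; first exact: is_linear_addZ.
  move=> v1 v2; rewrite dT_deformation_defect //.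
  by rewrite dT_defect0 // !scaler0.
by exists x => t; apply: nijenhuis_hom.
Qed.
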